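(* Let $\langle A_\alpha:\alpha<\mathfrak{p}\rangle$ be a tower. Let $X$ be the space on $(\omega\times\mathfrak{p})\cup\{\infty\}$ in which all points of $\omega\times\mathfrak{p}$ are isolated and a local subbase at $\infty$ consists of the sets $X\setminus(\{n\}\times\mathfrak{p})$ for $n<\omega$; $X\setminus(A_\alpha\times\alpha)$ for $\alpha<\mathfrak{p}$; and $X\setminus(B\times\alpha)$ where $\alpha<\mathfrak{p}$ has $\mathrm{cf}(\alpha)>\omega$ and $B$ is a pseudo-intersection of $\{A_\beta:\beta<\alpha\}$. Then $X$ is CFC, Fréchet, and not $L$-selective.
   Context: $\mathfrak{p}$ is the pseudo-intersection number. A pseudo-intersection of a family of subsets of $\omega$ is a set $B\subseteq\omega$ with $B\subseteq^*A$ (inclusion modulo finite) for every $A$ in the family. A tower of length $\kappa$ is a sequence $\langle A_\alpha:\alpha<\kappa\rangle$ of infinite subsets of $\omega$ with $A_\beta\subseteq^*A_\alpha$ for $\alpha<\beta$ and no infinite pseudo-intersection. A space is CFC if every countable subspace is first countable; it is Fréchet if whenever $x\in\overline{A}$ some sequence in $A$ converges to $x$. $\mathcal{F}(X)$ is the set of nonempty closed subsets of $X$; $\varphi:Y\rightarrow\mathcal{F}(X)$ is lower semicontinuous if for every open $W\subseteq X$, $\{y:\varphi(y)\cap W\neq\emptyset\}$ is open. $X$ is $L$-selective if every lower semicontinuous $\varphi:\omega+1\rightarrow\mathcal{F}(X)$ ($\omega+1$ with the order topology) has a continuous selection $s$ with $s(y)\in\varphi(y)$ for all $y$. *)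

From HB Require Import structures.
From mathcomp Require Import all_boot all_order.
From mathcomp Require Import all_classical all_reals topology.
Set Implicit Arguments.
Unset Strict Implicit.
Unset Printing Implicit Defensive.
Import Order.TTheory.
Local Open Scope classical_set_scope.

Definition subset_mod_fin (B A : set nat) : Prop := finite_set (B `\` A).

Definition pseudo_intersection (F : set (set nat)) (B : set nat) : Prop :=
  forall A, F A -> subset_mod_fin B A.

Definition SFIP (F : set (set nat)) : Prop :=
  forall s : seq (set nat), s != [::] -> (forall A, A \in s -> F A) ->
    infinite_set [set n | forall A, A \in s -> A n].

Definition p_family (F : set (set nat)) : Prop :=
  (forall A, F A -> infinite_set A) /\ SFIP F /\
  ~ (exists B, infinite_set B /\ pseudo_intersection F B).

(* Ordinals: a well-ordered type K "is" the cardinal p when it is an   *)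
(* initial ordinal (every proper initial segment has strictly smaller  *)
(* cardinality) whose cardinality is the pseudo-intersection number p. *)

Definition well_ordered d (K : orderType d) : Prop :=
  forall S : set K, S !=set0 -> exists m, S m /\ forall y, S y -> (m <= y)%O.

Definition initial_ordinal d (K : orderType d) : Prop :=
  forall a : K, ~ ([set: K] #<= [set b : K | (b < a)%O])%card.

Definition card_is_p d (K : orderType d) : Prop :=
  (exists F, p_family F /\ (F #<= [set: K])%card) /\
  (forall F, p_family F -> ([set: K] #<= F)%card).

Definition is_ordinal_p d (K : orderType d) : Prop :=
  well_ordered K /\ initial_ordinal K /\ card_is_p K.

(* cf(a) > omega: a is nonzero and every countable set of ordinals below a
   is bounded below a (this excludes a = 0, successors, and limits of
   countable cofinality) *)
Definition uncountable_cof d (K : orderType d) (a : K) : Prop :=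
  (exists b, (b < a)%O) /\
  forall f : nat -> K, (forall n, (f n < a)%O) ->
    exists b, (b < a)%O /\ forall n, (f n < b)%O.

Definition tower d (K : orderType d) (A : K -> set nat) : Prop :=
  (forall a, infinite_set (A a)) /\
  (forall a b, (a < b)%O -> subset_mod_fin (A b) (A a)) /\
  ~ (exists B, infinite_set B /\ pseudo_intersection (range A) B).

(* The space X on (omega x K) ∪ {oo}; oo is None, (n, a) is Some (n,a) *)

Section Xspace.
Context d (K : orderType d).

(* the underlying type; it mentions A so that the topology depends on A *)
Definition Xsp (A : K -> set nat) : Type := option (nat * K).

Variable A : K -> set nat.
HB.instance Definition _ := Choice.on (Xsp A).
HB.instance Definition _ := Pointed.on (set (Xsp A)).

Definition Xsubbase : set (set (Xsp A)) :=
  [set S | (exists p : nat * K, S = [set Some p])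
       \/ (exists n : nat, S = ~` [set Some (n, b) | b in [set: K]])
       \/ (exists a : K,
             S = ~` [set Some (m, b) | m in A a & b in [set b | (b < a)%O]])
       \/ (exists (a : K) (B : set nat),
             uncountable_cof a /\
             pseudo_intersection [set A b | b in [set b | (b < a)%O]] B /\
             S = ~` [set Some (m, b) | m in B & b in [set b | (b < a)%O]])].

HB.instance Definition _ :=
  isSubBaseTopological.Build (Xsp A) Xsubbase (@id (set (Xsp A))).

End Xspace.

(* every countable subspace is first countable: for each countable Y and
   y in Y there are countably many open neighbourhoods U_n of y in X such
   that the traces U_n ∩ Y form a local base at y of the subspace Y *)
Definition CFC (T : topologicalType) : Prop :=
  forall Y : set T, countable Y -> forall y, Y y ->
    exists U : nat -> set T, (forall n, open (U n) /\ U n y) /\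
      forall V, open V -> V y -> exists n, U n `&` Y `<=` V.

Definition Frechet (T : topologicalType) : Prop :=
  forall (Y : set T) (x : T), closure Y x ->
    exists u : nat -> T, (forall n, Y (u n)) /\ (u @ \oo --> x).

(* omega + 1 with the order topology, represented as option nat with
   None = omega: a set S is open iff whenever it contains omega it
   contains a final segment (N, omega] *)
Definition omega1_open (S : set (option nat)) : Prop :=
  S None -> exists N, forall n, (N <= n)%N -> S (Some n).

Definition lower_semicontinuous (T : topologicalType)
    (phi : option nat -> set T) : Prop :=
  forall W : set T, open W -> omega1_open [set y | phi y `&` W !=set0].

Definition omega1_continuous (T : topologicalType) (s : option nat -> T) :=
  forall W : set T, open W -> omega1_open (s @^-1` W).

Definition L_selective (T : topologicalType) : Prop :=
  forall phi : option nat -> set T,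
    (forall y, phi y !=set0 /\ closed (phi y)) ->
    lower_semicontinuous phi ->
    exists s : option nat -> T, omega1_continuous s /\ forall y, phi y (s y).

(* Since the tower has no infinite pseudo-intersection, a diagonal argument
   shows that every countable set of indices is bounded; together with the
   well-ordering of the indices this is all that is used about p.

   X is not L-selective: phi(n) = {n} x p and phi(omega) = {oo} is lower
   semicontinuous, but a continuous selection n |-> (n, g n) would put almost
   all (n, g n) in the neighbourhood X \ (A_t x t) of oo, where t bounds g,
   so A_t would be finite.

   X is CFC: a countable Y meets only countably many columns, and which of
   them lie below a depends only on the cut a makes in them. If a0 is the
   least index with the same cut, then A_a is almost contained in A_a0, so
   X \ (A_a0 x a0) and a row bound trace on Y inside X \ (A_a x a). The
   countably many cuts and row bounds thus give a countable base of traces at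
   oo; the sets X \ (B x a) with cf(a) > omega reduce to them, because the
   countably many columns of Y below a are bounded below a.

   X is Frechet: if oo is in the closure of Y, take the least t such that oo is
   in the closure of Y restricted to the columns below t. If cf(t) = omega,
   pick points of Y outside A_t x t in columns cofinal in t. Otherwise (or if
   there is no such t) the set E of rows along which Y is cofinal is not a
   pseudo-intersection of the A_b below t, so E \ A_b is infinite for some b,
   and points of Y in these rows with columns above b converge to oo. *)

From mathcomp Require Import all_boot all_order.
From mathcomp Require Import all_classical all_reals topology finmap.
Import Order.TTheory.
Set Implicit Arguments.
Unset Strict Implicit.
Unset Printing Implicit Defensive.
Local Open Scope classical_set_scope.

Lemma finite_nat_bounded (F : set nat) :
  finite_set F -> exists N, forall n, F n -> (n < N)%N.
Proof.
move=> /finite_fsetP [X ->].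
suff [N HN] : exists N, forall n, n \in enum_fset X -> (n < N)%N by exists N.
elim: (enum_fset X) => [|a s [N HN]]; first by exists 0%N.
exists (maxn a.+1 N) => n; rewrite inE => /orP [/eqP ->|/HN nN].
  by rewrite leq_max leqnn.
by rewrite leq_max nN orbT.
Qed.

Lemma bounded_nat_finite (F : set nat) N :
  (forall n, F n -> (n < N)%N) -> finite_set F.
Proof. by move=> FN; apply: (sub_finite_set _ (finite_II N)) => n /FN. Qed.

Lemma infinite_nat_unbounded (E : set nat) :
  infinite_set E -> forall k, exists n, E n /\ (k <= n)%N.
Proof.
move=> Einf k; apply: contrapT => noE; apply: Einf.
apply: (@bounded_nat_finite _ k) => n En; rewrite ltnNge; apply/negP => kn.
by apply: noE; exists n.
Qed.

Lemma eventually_notin_finite (F : set nat) (n : nat -> nat) :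
  (forall k, (k <= n k)%N) -> finite_set F ->
  exists N, forall k, (N <= k)%N -> ~ F (n k).
Proof.
move=> kn /finite_nat_bounded [M FM]; exists M => k Mk Fk.
by have := FM _ Fk; rewrite ltnNge (leq_trans Mk (kn k)).
Qed.

Lemma subset_mod_fin_trans (B C D : set nat) :
  subset_mod_fin B C -> subset_mod_fin C D -> subset_mod_fin B D.
Proof.
move=> BC CD; have BCD : finite_set ((B `\` C) `|` (C `\` D)) by rewrite finite_setU.
apply: sub_finite_set BCD => n [Bn nDn].
by have [Cn|nCn] := pselect (C n); [right | left].
Qed.

Lemma nested_mod_fin_pseudo_intersection (C : nat -> set nat) :
  (forall k, infinite_set (C k)) ->
  (forall k k', (k <= k')%N -> subset_mod_fin (C k') (C k)) ->
  exists B, infinite_set B /\ forall k, subset_mod_fin B (C k).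
Proof.
move=> Cinf Cnested.
pose D k := [set n | forall j, (j <= k)%N -> C j n].
have Dinf k : infinite_set (D k).
  have Ifin : finite_set (\bigcup_(j in `I_k.+1) (C k `\` C j)).
    apply: bigcup_finite; first exact: finite_II.
    by move=> j jk; apply: Cnested.
  apply: sub_infinite_set (infinite_setD (Cinf k) Ifin) => n [Ckn nI] j jk.
  by apply: contrapT => nCjn; apply: nI; exists j.
have [b Db] := choice (fun k => infinite_nat_unbounded (Dinf k) k).
exists (range b); split.
  move=> /finite_nat_bounded [N bN].
  by have := bN _ (imageT b N); rewrite ltnNge (Db N).2.
move=> k; apply: (sub_finite_set _ (finite_image b (finite_II k))).
move=> _ [[j _ <-] nCk]; exists j => //=; rewrite /= ltnNge; apply/negP => kj.
exact/nCk/((Db j).1 k kj).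
Qed.

Lemma running_max d (K : orderType d) (f : nat -> K) : exists g : nat -> K,
  [/\ forall k, (f k <= g k)%O, forall k k', (k <= k')%N -> (g k <= g k')%O &
      forall t, (forall n, (f n < t)%O) -> forall k, (g k < t)%O].
Proof.
pose g := fix g k := if k is k'.+1 then Order.max (g k') (f k) else f 0%N.
exists g; split.
- by case => [|k] //=; rewrite le_max lexx orbT.
- move=> k k'; elim: k' => [|k' IH]; first by rewrite leqn0 => /eqP ->.
  rewrite leq_eqVlt => /orP [/eqP ->//|]; rewrite ltnS => /IH kk'.
  by apply: le_trans kk' _ => /=; rewrite le_max lexx.
- by move=> t ft; elim => [|k IH] //=; rewrite gt_max IH ft.
Qed.

Lemma not_closure_nbhs (T : topologicalType) (S : set T) (x : T) :
  ~ closure S x -> exists V, nbhs x V /\ forall y, S y -> ~ V y.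
Proof.
move=> nSx; apply: contrapT => noV; apply: nSx => V xV.
apply: contrapT => SV0; apply: noV; exists V; split=> // y Sy Vy.
by apply: SV0; exists y.
Qed.

Lemma countable_cofP d (K : orderType d) (t : K) : ~ uncountable_cof t ->
  (forall b, ~ (b < t)%O) \/
  exists f : nat -> K, (forall n, (f n < t)%O) /\
                       forall b, (b < t)%O -> exists n, (b <= f n)%O.
Proof.
move=> /not_andP [nob|/existsNP [f /not_implyP [ft f_unb]]].
  by left=> b bt; apply: nob; exists b.
right; exists f; split=> // b bt; apply: contrapT => nf.
apply: f_unb; exists b; split=> // n.
by rewrite ltNge; apply/negP => bfn; apply: nf; exists n.
Qed.

Section Tower.
Context d (K : orderType d) (A : K -> set nat).
Hypothesis towerA : tower A.

Lemma tower_le_mod_fin (a b : K) : (a <= b)%O -> subset_mod_fin (A b) (A a).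
Proof.
rewrite le_eqVlt => /orP [/eqP <-|ab]; last exact: towerA.2.1.
by rewrite /subset_mod_fin setDv; exact: finite_set0.
Qed.

Lemma tower_inhabited : inhabited K.
Proof.
apply: contrapT => noK; apply: towerA.2.2; exists setT; split.
  exact: infinite_nat.
by move=> ? [a _ _]; case: (noK (inhabits a)).
Qed.

Lemma tower_bounded_seq (f : nat -> K) : exists t, forall n, (f n < t)%O.
Proof.
apply: contrapT => unbounded.
have unb t : exists n, (t <= f n)%O.
  apply: contrapT => nf; apply: unbounded; exists t => n.
  by rewrite ltNge; apply/negP => tf; apply: nf; exists n.
have [g [fg gmono _]] := running_max f.
have [B [Binf BA]] := nested_mod_fin_pseudo_intersection
  (fun k => towerA.1 (g k)) (fun k k' kk' => tower_le_mod_fin (gmono k k' kk')).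
apply: towerA.2.2; exists B; split=> // _ [a _ <-].
have [n an] := unb a.
exact: subset_mod_fin_trans (BA n) (tower_le_mod_fin (le_trans an (fg n))).
Qed.

End Tower.

Section XBasics.
Context d (K : orderType d) {A : K -> set nat}.

Definition row (n : nat) : set (Xsp A) := [set Some (n, b) | b in [set: K]].

Definition row_compl (n : nat) : set (Xsp A) := ~` row n.

Definition box_compl (B : set nat) (a : K) : set (Xsp A) :=
  ~` [set Some (m, b) | m in B & b in [set b | (b < a)%O]].

Definition rows_ge (N : nat) : set (Xsp A) :=
  [set x | forall n b, x = Some (n, b) -> (N <= n)%N].

Lemma row_complE n m b : row_compl n (Some (m, b)) <-> m <> n.
Proof.
split=> [nrow mn|mn [c _ [mn' _]]]; last exact: mn.
by apply: nrow; exists b; rewrite ?mn.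
Qed.

Lemma row_compl_oo n : row_compl n None.
Proof. by move=> [c _]. Qed.

Lemma box_complE B a m b : box_compl B a (Some (m, b)) <-> ~ (B m /\ (b < a)%O).
Proof.
split=> [nbox [Bm ba]|nBa [k Bk [c ca [km cb]]]]; last by apply: nBa; rewrite -km -cb.
by apply: nbox; exists m => //; exists b.
Qed.

Lemma box_compl_oo B a : box_compl B a None.
Proof. by move=> [k _ [c _]]. Qed.

Lemma Xnbhs_finI (x : Xsp A) W : nbhs x W <->
  exists B, [/\ finI_from (@Xsubbase _ _ A) id B, B x & B `<=` W].
Proof.
split=> [[B [[D sD <-] [i Di ix] BW]]|[B [fB Bx BW]]].
  by exists i; split=> [|//|y iy]; [exact: sD | apply: BW; exists i].
exists B; split => //; exists [set B]; first by move=> _ ->.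
by rewrite bigcup_set1.
Qed.

Lemma Xsubbase_nbhs (x : Xsp A) S : Xsubbase S -> S x -> nbhs x S.
Proof. by move=> sS Sx; apply/Xnbhs_finI; exists S; split=> //; exact: finI_from1. Qed.

Lemma Xnbhs_ind (x : Xsp A) (P : set (Xsp A) -> Prop) :
  P setT -> (forall U V, P U -> P V -> P (U `&` V)) ->
  (forall U V, U `<=` V -> P U -> P V) ->
  (forall S, Xsubbase S -> S x -> P S) ->
  forall W, nbhs x W -> P W.
Proof.
move=> PT PI PS Psub W /Xnbhs_finI [_ [[D sD <-] Dx DW]]; apply: (PS _ _ DW).
have : forall i, i \in enum_fset D -> Xsubbase i /\ i x.
  by move=> i iD; split; [exact: (set_mem (sD i iD)) | exact: Dx].
have -> : \bigcap_(i in [set` D]) id i =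
  [set y | forall i, i \in enum_fset D -> i y] by [].
elim: (enum_fset D) => [|S s IH] sub; first by apply: PS PT => y _ i.
have -> : [set y | forall i, i \in S :: s -> i y] =
          S `&` [set y | forall i, i \in s -> i y].
  apply/seteqP; split=> y.
    by move=> Sy; split=> [|i si]; apply: Sy; rewrite inE ?eqxx ?si ?orbT.
  by move=> [Sy sy] i; rewrite inE => /orP [/eqP ->|/sy].
apply: PI; first by have [] := sub S (mem_head _ _); apply: Psub.
by apply: IH => i si; apply: sub; rewrite inE si orbT.
Qed.

Lemma Xsubbase_ooP (S : set (Xsp A)) : Xsubbase S -> S None ->
  [\/ exists n, S = row_compl n,
      exists a, S = box_compl (A a) a |
      exists a B, [/\ uncountable_cof a,
        pseudo_intersection [set A b | b in [set b | (b < a)%O]] B &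
        S = box_compl B a]].
Proof.
case=> [[p ->]//|[[n ->]|[[a ->]|[a [B [a_cof [BA ->]]]]]]] _.
- by apply: Or31; exists n.
- by apply: Or32; exists a.
- by apply: Or33; exists a, B.
Qed.

Lemma Xnbhs_oo_ind (P : set (Xsp A) -> Prop) :
  P setT -> (forall U V, P U -> P V -> P (U `&` V)) ->
  (forall U V, U `<=` V -> P U -> P V) ->
  (forall n, P (row_compl n)) ->
  (forall a, P (box_compl (A a) a)) ->
  (forall a B, uncountable_cof a ->
     pseudo_intersection [set A b | b in [set b | (b < a)%O]] B ->
     P (box_compl B a)) ->
  forall W, nbhs (None : Xsp A) W -> P W.
Proof.
move=> PT PI PS Prow Pbox Ppi; apply: Xnbhs_ind => // S /Xsubbase_ooP /[apply].
by case=> [[n ->]|[a ->]|[a [B [a_cof BA ->]]]]; auto.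
Qed.

Lemma Xsubbase_point p : Xsubbase [set Some p : Xsp A].
Proof. by left; exists p. Qed.

Lemma Xopen_at_oo (W : set (Xsp A)) : (W None -> nbhs (None : Xsp A) W) -> open W.
Proof.
move=> Woo; rewrite openE => -[p|] Wx; last exact: Woo.
by apply: filterS (Xsubbase_nbhs (Xsubbase_point p) erefl) => y ->.
Qed.

Lemma Xsubbase_row n : Xsubbase (row_compl n).
Proof. by right; left; exists n. Qed.

Lemma Xsubbase_box a : Xsubbase (box_compl (A a) a).
Proof. by right; right; left; exists a. Qed.

Lemma Xsubbase_pi_box a B : uncountable_cof a ->
  pseudo_intersection [set A b | b in [set b | (b < a)%O]] B ->
  Xsubbase (box_compl B a).
Proof. by move=> a_cof BA; right; right; right; exists a, B. Qed.

Lemma nbhs_oo_rows_ge N : nbhs (None : Xsp A) (rows_ge N).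
Proof.
elim: N => [|N IH]; first by apply: filterS filterT => x _ n b.
have rowN := Xsubbase_nbhs (Xsubbase_row N) (row_compl_oo (n:=N)).
apply: filterS (filterI IH rowN) => x [geN rowNx] n b xnb.
move: (geN n b xnb) rowNx; rewrite xnb leq_eqVlt => /orP [/eqP <-|//].
by move/row_complE.
Qed.

Lemma closed_row n : closed (row n).
Proof.
rewrite -[row n]setCK; apply/open_closedC/Xopen_at_oo => _.
exact: Xsubbase_nbhs (Xsubbase_row n) (row_compl_oo (n:=n)).
Qed.

Lemma closed_oo : closed [set None : Xsp A].
Proof.
have ooC : open (~` [set None : Xsp A]) by apply: Xopen_at_oo => /(_ erefl).
by rewrite -[[set None]]setCK; exact: open_closedC.
Qed.

Lemma nbhs_oo_corner (W : set (Xsp A)) : inhabited K -> nbhs (None : Xsp A) W ->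
  exists N a, forall n b, (N <= n)%N -> (a <= b)%O -> W (Some (n, b)).
Proof.
move=> [k0]; move: W; apply: (Xnbhs_oo_ind (P := fun W =>
  exists N a, forall n b, (N <= n)%N -> (a <= b)%O -> W (Some (n, b)))).
- by exists 0%N, k0.
- move=> U V [N1 [a1 U1]] [N2 [a2 V2]]; exists (maxn N1 N2), (Order.max a1 a2).
  by move=> n b; rewrite geq_max ge_max => /andP [n1 n2] /andP [b1 b2]; split;
    [exact: U1 | exact: V2].
- by move=> U V UV [N [a U1]]; exists N, a => n b Nn ab; apply/UV/U1.
- move=> m; exists m.+1, k0 => n b mn _; apply/row_complE => nm.
  by rewrite nm ltnn in mn.
- move=> a; exists 0%N, a => n b _ ab; apply/box_complE => -[_].
  by rewrite ltNge ab.
- move=> a B _ _; exists 0%N, a => n b _ ab; apply/box_complE => -[_].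
  by rewrite ltNge ab.
Qed.

Lemma countable_trace_base_oo (Y : set (Xsp A)) (I : countType) (W : I -> set (Xsp A)) :
  (forall i, nbhs (None : Xsp A) (W i)) ->
  (forall S, Xsubbase S -> S None ->
     exists s : seq I, [set x | forall i, i \in s -> W i x] `&` Y `<=` S) ->
  exists U : nat -> set (Xsp A), (forall n, open (U n) /\ U n None) /\
    forall V : set (Xsp A), open V -> V None -> exists n, U n `&` Y `<=` V.
Proof.
move=> W_nbhs W_trace.
pose Ws (s : seq I) := [set x | forall i, i \in s -> W i x].
have Ws_nbhs s : nbhs (None : Xsp A) (Ws s).
  elim: s => [|i s IH]; first by apply: filterS filterT => x _ i.
  apply: filterS (filterI (W_nbhs i) IH) => x [Wix Wsx] j.
  by rewrite inE => /orP [/eqP ->|/Wsx].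
pose U k := if choice.unpickle k is Some s then Ws s else setT.
exists U; split.
  move=> k; rewrite /U; case: choice.unpickle => [s|]; last by split; [exact: openT|].
  split; last exact: nbhs_singleton (Ws_nbhs s).
  by apply: Xopen_at_oo => _; exact: Ws_nbhs.
move=> V Vopen Voo.
suff [s sV] : exists s, Ws s `&` Y `<=` V.
  by exists (choice.pickle s); rewrite /U choice.pickleK.
move: (open_nbhs_nbhs (conj Vopen Voo)).
apply: (Xnbhs_ind (P := fun V => exists s, Ws s `&` Y `<=` V)); last exact: W_trace.
- by exists [::].
- move=> V1 V2 [s1 sV1] [s2 sV2]; exists (s1 ++ s2) => x [Wx Yx]; split.
    by apply: sV1; split=> // i si; apply: Wx; rewrite mem_cat si.
  by apply: sV2; split=> // i si; apply: Wx; rewrite mem_cat si orbT.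
- by move=> V1 V2 V12 [s sV1]; exists s => x /sV1 /V12.
Qed.

Lemma countable_columns (Y : set (Xsp A)) : inhabited K -> countable Y ->
  exists c : nat -> K, forall n b, Y (Some (n, b)) -> exists m, c m = b.
Proof.
move=> [k0] /pcard_surjP [e e_surj].
exists (fun m => if e m is Some (_, b) then b else k0) => n b /e_surj [m _ em].
by exists m; rewrite em.
Qed.

End XBasics.

Section NotLSelective.
Context d (K : orderType d) (A : K -> set nat).
Hypothesis towerA : tower A.

Lemma tower_not_L_selective : ~ L_selective (Xsp A).
Proof.
move=> Lsel; have [k0] := tower_inhabited towerA.
pose phi (y : option nat) : set (Xsp A) := if y is Some n then row n else [set None].
have phiF y : phi y !=set0 /\ closed (phi y).
  case: y => [n|]; split; [by exists (Some (n, k0)), k0 | exact: closed_row |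
                           by exists None | exact: closed_oo].
have phi_lsc : lower_semicontinuous phi.
  move=> W Wopen [x [/= xoo Wx]]; rewrite xoo in Wx.
  have [N [a Wcorner]] :=
    nbhs_oo_corner (inhabits k0) (open_nbhs_nbhs (conj Wopen Wx)).
  by exists N => n Nn; exists (Some (n, a)); split; [exists a | exact: Wcorner].
have [s [s_cont s_phi]] := Lsel phi phiF phi_lsc.
have sg n : exists b, s (Some n) = Some (n, b).
  by have [b _ <-] := s_phi (Some n); exists b.
have [g {}sg] := choice sg.
have [t gt] := tower_bounded_seq towerA g.
have box_open : open (box_compl (A t) t : set (Xsp A)).
  apply: Xopen_at_oo => _.
  exact: Xsubbase_nbhs (Xsubbase_box t) (box_compl_oo (B := A t) (a := t)).
have soo : s None = None := s_phi None.
have [N sN] : exists N, forall n, (N <= n)%N -> box_compl (A t) t (s (Some n)).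
  by apply: s_cont box_open _; rewrite /= soo; exact: box_compl_oo.
apply: (towerA.1 t); apply: (@bounded_nat_finite _ N) => n Atn.
rewrite ltnNge; apply/negP => Nn.
by have := sN n Nn; rewrite /= sg => /box_complE; apply.
Qed.

End NotLSelective.

Section Cuts.
Context d (K : orderType d) {A : K -> set nat}.
Hypotheses (towerA : tower A) (wellK : well_ordered K).
Variables (Y : set (Xsp A)) (c : nat -> K).
Hypothesis c_cover : forall n b, Y (Some (n, b)) -> exists m, c m = b.

(* A cut of the columns [c i] is named by [None] (all of them) or by [Some m]
   (those below [c m]). *)
Definition below_cut (j : option nat) (b : K) : Prop :=
  if j is Some m then (b < c m)%O else True.

Definition cut_bound (j : option nat) (a : K) : Prop :=
  forall i, below_cut j (c i) -> (c i < a)%O.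

Definition least_cut_bound (j : option nat) (a : K) : Prop :=
  cut_bound j a /\ forall b, cut_bound j b -> (a <= b)%O.

Definition cut_nbhs (jN : option nat * nat) : set (Xsp A) :=
  rows_ge jN.2 `&` \bigcap_(a in least_cut_bound jN.1) box_compl (A a) a.

Lemma cut_nbhs_oo jN : nbhs (None : Xsp A) (cut_nbhs jN).
Proof.
case: jN => j N; apply: filterI (nbhs_oo_rows_ge N) _.
have [[a a_least]|no_least] := pselect (exists a, least_cut_bound j a).
  have boxa := Xsubbase_nbhs (Xsubbase_box a) (box_compl_oo (B:=A a) (a:=a)).
  apply: filterS boxa => x xa b b_least.
  suff -> : b = a by [].
  by apply/le_anti; rewrite (a_least.2 _ b_least.1) (b_least.2 _ a_least.1).
by apply: filterS filterT => x _ a a_least; case: no_least; exists a.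
Qed.

Lemma cut_of (a : K) :
  exists j, cut_bound j a /\ forall i, (c i < a)%O -> below_cut j (c i).
Proof.
have [all_below|/existsNP [i0 /negP]] := pselect (forall i, (c i < a)%O).
  by exists None; split=> // i _; exact: all_below.
rewrite -leNgt => ai0.
have [_ [[m [<- am]] m_least]] :=
  wellK (ex_intro _ (c i0) (ex_intro _ i0 (conj erefl ai0)) :
         [set b | exists i, c i = b /\ (a <= b)%O] !=set0).
exists (Some m); split=> i /=; last by move=> ia; exact: lt_le_trans ia am.
move=> icm; rewrite ltNge; apply/negP => ai.
by have := m_least (c i) (ex_intro _ i (conj erefl ai)); rewrite leNgt icm.
Qed.

Lemma box_trace_cut (a : K) : exists jN, cut_nbhs jN `&` Y `<=` box_compl (A a) a.
Proof.
have [j [ja a_below]] := cut_of a.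
have [a0 [a0j a0_least]] := wellK (ex_intro _ a ja : cut_bound j !=set0).
have [N AN] := finite_nat_bounded (tower_le_mod_fin towerA (a0_least a ja)).
exists (j, N) => -[[n b]|] [[x_rows x_cut] Yx]; last exact: box_compl_oo.
apply/box_complE => -[Aan ba].
have /box_complE := x_cut a0 (conj a0j a0_least); apply; split.
  apply: contrapT => nA0n.
  by have := AN n (conj Aan nA0n); rewrite ltnNge (x_rows n b erefl).
have [i ci] := c_cover Yx; rewrite -ci; apply: a0j; apply: a_below; by rewrite ci.
Qed.

Lemma pi_box_trace_cut (a : K) (B : set nat) : uncountable_cof a ->
  pseudo_intersection [set A b | b in [set b | (b < a)%O]] B ->
  exists s : seq (option nat * nat),
    [set x | forall i, i \in s -> cut_nbhs i x] `&` Y `<=` box_compl B a.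
Proof.
move=> [[b0 b0a] a_cof] BA.
have f_lt i : ((if (c i < a)%O then c i else b0) < a)%O by case: ifP.
have [b [ba c_b]] := a_cof _ f_lt.
have [N BN] := finite_nat_bounded (BA (A b) (ex_intro2 _ _ b ba erefl)).
have [jN jN_box] := box_trace_cut b.
exists [:: (None, N); jN] => -[[n g]|] [Wx Yx]; last exact: box_compl_oo.
apply/box_complE => -[Bn ga].
have Nn : (N <= n)%N := (Wx _ (mem_head _ _)).1 n g erefl.
have jNx : cut_nbhs jN (Some (n, g)) by apply: Wx; rewrite !inE eqxx orbT.
have /box_complE := jN_box _ (conj jNx Yx); apply; split.
  by apply: contrapT => nAbn; have := BN n (conj Bn nAbn); rewrite ltnNge Nn.
by have [i ci] := c_cover Yx; have := c_b i; rewrite ci ga.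
Qed.

End Cuts.

Lemma tower_CFC d (K : orderType d) (A : K -> set nat) :
  tower A -> well_ordered K -> CFC (Xsp A).
Proof.
move=> towerA wellK Y Ycount [p|] Yy.
  exists (fun _ => [set Some p]); split=> [_|V _ Vp]; last by exists 0%N => _ [-> _].
  by split=> //; apply: Xopen_at_oo.
have [c c_cover] := countable_columns (tower_inhabited towerA) Ycount.
apply: (countable_trace_base_oo (W := cut_nbhs c)) => [jN|S]; first exact: cut_nbhs_oo.
move=> /Xsubbase_ooP /[apply] -[[m ->]|[a ->]|[a [B [a_cof BA ->]]]].
- exists [:: (None, m.+1)] => -[[n b]|] [Wx _]; last exact: row_compl_oo.
  apply/row_complE => nm.
  by have := (Wx _ (mem_head _ _)).1 n b erefl; rewrite nm ltnn.
- have [jN jN_box] := box_trace_cut towerA wellK c_cover a.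
  by exists [:: jN] => x [Wx Yx]; apply: jN_box; split=> //; apply: Wx; rewrite inE.
- exact: pi_box_trace_cut.
Qed.

Section Frechet.
Context d (K : orderType d) {A : K -> set nat}.
Hypothesis towerA : tower A.

Definition restrict_cols (Y : set (Xsp A)) (P : K -> Prop) : set (Xsp A) :=
  [set x | Y x /\ exists n b, x = Some (n, b) /\ P b].

Lemma cvg_oo_columns (n : nat -> nat) (g : nat -> K) (t : K) :
  (forall k, (k <= n k)%N) -> (forall k, ~ A t (n k)) ->
  (forall a, (a < t)%O -> exists N, forall k, (N <= k)%N -> (a <= g k)%O) ->
  (uncountable_cof t -> exists N, forall k, (N <= k)%N -> (t <= g k)%O) ->
  (fun k => Some (n k, g k) : Xsp A) @ \oo --> (None : Xsp A).
Proof.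
move=> kn nA g_low g_top.
have box_ev (X : set nat) a :
    (exists N, forall k, (N <= k)%N -> (a <= g k)%O) \/ subset_mod_fin X (A t) ->
    \forall k \near \oo, box_compl X a (Some (n k, g k)).
  case=> [[N ag]|XAt].
    by exists N => // k Nk; apply/box_complE => -[_]; rewrite ltNge ag.
  have [N NXA] := eventually_notin_finite kn XAt.
  exists N => // k Nk; apply/box_complE => -[Xn _]; apply: (NXA k Nk).
  by split=> //; exact: nA.
apply: (Xnbhs_oo_ind (P := fun W => \forall k \near \oo, W (Some (n k, g k)))).
- exact: filterT.
- by move=> U V; apply: filterI.
- by move=> U V UV; apply: filterS => k; apply: UV.
- move=> m; exists m.+1 => // k mk; apply/row_complE => nm.
  by have := leq_trans mk (kn k); rewrite nm ltnn.
- move=> a; apply: box_ev.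
  have [alt|tla] := ltP a t; [left; exact: g_low | right; exact: tower_le_mod_fin].
- move=> a B a_cof BA; apply: box_ev.
  have [alt|tla|aeqt] := ltgtP a t; [left; exact: g_low | right | left].
  - exact: BA (A t) (ex_intro2 _ _ t tla erefl).
  - by subst a; exact: g_top.
Qed.

Definition cofinal_rows (Y : set (Xsp A)) (P : K -> Prop) : set nat :=
  [set n | forall b, P b -> exists g, [/\ Y (Some (n, g)), P g & (b <= g)%O]].

Section ColumnPredicate.
Variables (Y : set (Xsp A)) (P : K -> Prop).
Hypothesis P_cof : forall f : nat -> K, (forall n, P (f n)) ->
  exists b, P b /\ forall n, (f n < b)%O.
Hypothesis P_least : forall b, P b ->
  ~ closure (restrict_cols Y (fun g => (g < b)%O)) None.
Hypothesis Y_P_cl : closure (restrict_cols Y P) None.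
Hypothesis pi_nbhs : forall E : set nat, (forall b, P b -> subset_mod_fin E (A b)) ->
  exists V, nbhs (None : Xsp A) V /\ forall n g, V (Some (n, g)) -> P g -> ~ E n.

Lemma cofinal_rows_escape :
  exists t, P t /\ infinite_set (cofinal_rows Y P `\` A t).
Proof.
have [_ [[_ [n0 [b0 [_ Pb0]]]] _]] := Y_P_cl filterT.
have row_bound n : exists b, P b /\ (~ cofinal_rows Y P n ->
    forall g, Y (Some (n, g)) -> P g -> (g < b)%O).
  have [En|/existsNP [b /not_implyP [Pb nob]]] := pselect (cofinal_rows Y P n).
    by exists b0.
  exists b; split=> // _ g Yg Pg; rewrite ltNge; apply/negP => bg.
  by apply: nob; exists g.
have [bf bfP] := choice row_bound.
have [t [Pt bft]] := P_cof (fun n => (bfP n).1).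
have [V [Vnbhs Vt]] := not_closure_nbhs (P_least Pt).
apply: contrapT => noesc.
have [V' [V'nbhs V'E]] : exists V, nbhs (None : Xsp A) V /\
    forall n g, V (Some (n, g)) -> P g -> ~ cofinal_rows Y P n.
  apply: pi_nbhs => b Pb; apply: contrapT => Einf; apply: noesc; by exists b.
have [x [[Yx [n [g [xng Pg]]]] [Vx V'x]]] := Y_P_cl (filterI Vnbhs V'nbhs).
subst x; apply: (Vt _ _ Vx); split=> //; exists n, g; split=> //.
exact: lt_trans ((bfP n).2 (V'E n g V'x Pg) g Yx Pg) (bft n).
Qed.

Lemma frechet_cofinal_rows :
  exists u : nat -> Xsp A, (forall k, Y (u k)) /\ u @ \oo --> (None : Xsp A).
Proof.
have [t [Pt Einf]] := cofinal_rows_escape.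
have pick k : exists p : nat * K,
    [/\ (k <= p.1)%N, ~ A t p.1, Y (Some p) & (t <= p.2)%O].
  have [n [[En nAn] kn]] := infinite_nat_unbounded Einf k.
  by have [g [Yg _ tg]] := En t Pt; exists (n, g).
have [p pP] := choice pick.
exists (fun k => Some ((p k).1, (p k).2)); split.
  by move=> k; case: (p k) (pP k) => ? ? [].
apply: (cvg_oo_columns (t := t)) => [k|k|a alt|_].
- by case: (pP k).
- by case: (pP k).
- by exists 0%N => k _; apply: le_trans (ltW alt) _; case: (pP k).
- by exists 0%N => k _; case: (pP k).
Qed.

End ColumnPredicate.

Lemma frechet_countable_cof (Y : set (Xsp A)) (t : K) (f : nat -> K) :
  (forall n, (f n < t)%O) -> (forall b, (b < t)%O -> exists n, (b <= f n)%O) ->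
  (forall b, (b < t)%O -> ~ closure (restrict_cols Y (fun g => (g < b)%O)) None) ->
  closure (restrict_cols Y (fun g => (g < t)%O)) None ->
  exists u : nat -> Xsp A, (forall k, Y (u k)) /\ u @ \oo --> (None : Xsp A).
Proof.
move=> ft f_cof t_least Yt_cl.
have [g [fg g_mono /(_ t ft) gt]] := running_max f.
have [V Vg] := choice (fun k => not_closure_nbhs (t_least _ (gt k))).
have pick k : exists p : nat * K,
    [/\ (k <= p.1)%N, ~ A t p.1, Y (Some p), (p.2 < t)%O & (g k <= p.2)%O].
  have Wnbhs : nbhs (None : Xsp A) (V k `&` rows_ge k `&` box_compl (A t) t).
    apply: filterI; first exact: filterI (Vg k).1 (nbhs_oo_rows_ge k).
    exact: Xsubbase_nbhs (Xsubbase_box t) (box_compl_oo (B := A t) (a := t)).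
  have [x [[Yx [n [b [xnb bt]]]] [[Vx kx] tx]]] := Yt_cl _ Wnbhs.
  subst x; exists (n, b); split=> //=.
  - exact: kx n b erefl.
  - by move=> Atn; move/box_complE: tx; apply.
  - rewrite leNgt; apply/negP => bg; apply: (Vg k).2 Vx.
    by split=> //; exists n, b.
have [p pP] := choice pick.
exists (fun k => Some ((p k).1, (p k).2)); split.
  by move=> k; case: (p k) (pP k) => ? ? [].
apply: (cvg_oo_columns (t := t)) => [k|k|a alt|t_cof].
- by case: (pP k).
- by case: (pP k).
- have [m am] := f_cof a alt; exists m => k mk; case: (pP k) => _ _ _ _ gkp.
  exact: le_trans am (le_trans (fg m) (le_trans (g_mono _ _ mk) gkp)).
- have [b [bt fb]] := t_cof.2 f ft.
  by have [n bn] := f_cof b bt; have := fb n; rewrite ltNge bn.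
Qed.

End Frechet.

Lemma tower_Frechet d (K : orderType d) (A : K -> set nat) :
  tower A -> well_ordered K -> Frechet (Xsp A).
Proof.
move=> towerA wellK Y x Ycl.
have const y : Y y -> exists u : nat -> Xsp A, (forall n, Y (u n)) /\ u @ \oo --> y.
  by move=> Yy; exists (fun=> y); split=> //; exact: cvg_cst.
case: x Ycl => [p|] Ycl.
  have [z [Yz zp]] := Ycl _ (Xsubbase_nbhs (Xsubbase_point p) erefl).
  by apply: const; rewrite -zp.
have [Yoo|nYoo] := pselect (Y None); first exact: const.
have [Yt_ex|none] :=
  pselect (exists a, closure (restrict_cols Y (fun g => (g < a)%O)) None).
  have [t [Yt t_least]] := wellK _ Yt_ex.
  have below_t b : (b < t)%O -> ~ closure (restrict_cols Y (fun g => (g < b)%O)) None.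
    by move=> bt Yb; have := t_least b Yb; rewrite leNgt bt.
  have [t_cof|/countable_cofP [no_below|[f [ft f_cof]]]] := pselect (uncountable_cof t).
  - apply: (frechet_cofinal_rows towerA (P := fun g => (g < t)%O)) => //.
      exact: t_cof.2.
    move=> E EA; exists (box_compl E t); split; last first.
      by move=> n g /box_complE Etn gt En; apply: Etn.
    apply: Xsubbase_nbhs (box_compl_oo (B := E) (a := t)).
    by apply: Xsubbase_pi_box => // _ [b bt <-]; exact: EA.
  - by have [_ [[_ [n [g [_ gt]]]] _]] := Yt _ filterT; case: (no_below g).
  - exact: frechet_countable_cof ft f_cof below_t Yt.
apply: (frechet_cofinal_rows towerA (P := fun=> True)) => //.
- by move=> f _; have [b fb] := tower_bounded_seq towerA f; exists b.
- by move=> b _ Yb; apply: none; exists b.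
- move=> V Voo; have [y [Yy Vy]] := Ycl V Voo; exists y; split=> //; split=> //.
  by case: y Yy Vy => [[n g]|] Yy //; exists n, g.
- move=> E EA; have [Efin|Einf] := pselect (finite_set E).
    have [M EM] := finite_nat_bounded Efin; exists (rows_ge M).
    split=> [|n g Mn _ En]; first exact: nbhs_oo_rows_ge.
    by have := EM n En; rewrite ltnNge (Mn n g erefl).
  by case: towerA.2.2; exists E; split=> // _ [b _ <-]; exact: EA.
Qed.

Theorem mainTheorem9 (d : Order.disp_t) (K : orderType d) (A : K -> set nat) :
  is_ordinal_p K -> tower A ->
  CFC (Xsp A) /\ Frechet (Xsp A) /\ ~ L_selective (Xsp A).
Proof.
move=> [wellK _] towerA; split; first exact: tower_CFC.
by split; [exact: tower_Frechet | exact: tower_not_L_selective].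
Qed.
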